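(* For $m,n\in\mathbb N$ and $k=\min\{m,n\}$, the expected value of $\|G\|$ for a random bipartite graph $G\in\mathcal G(m,n,1/2)$ satisfies \[\mathbb E_{m,n,1/2}(\|G\|)\ge\frac18\sqrt{\frac k2}-1.\]
   Context: $\mathcal G(m,n,p)$ is the probability space of bipartite graphs $G\subseteq\{r_1,\dots,r_m\}\times\{c_1,\dots,c_n\}$ in which each of the $mn$ possible edges is present independently with probability $p$. The biadjacency matrix $M(G)$ is the $m\times n$ $0$–$1$ matrix with $(i,j)$ entry $1$ iff $(r_i,c_j)$ is an edge, and $\|G\|=\|M(G)\|_\bullet=\sup\{\|M(G)\bullet X\|:X\in M_{m,n}(\mathbb F),\|X\|\le1\}$ is the Schur norm (entrywise product, operator norm $\ell^2_n\to\ell^2_m$, $\mathbb F\in\{\mathbb R,\mathbb C\}$). *)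

From HB Require Import structures.
From mathcomp Require Import all_boot all_order all_algebra.
From mathcomp Require Import classical_sets reals.
From mathcomp.real_closed Require Import complex.
Set Implicit Arguments. Unset Strict Implicit. Unset Printing Implicit Defensive.
Import Order.TTheory GRing.Theory Num.Theory.
Local Open Scope ring_scope.
Local Open Scope classical_set_scope.

(* Operator norm l^2_n -> l^2_m of a matrix over a scalar field F, where
   [abs2 : F -> R] is the squared modulus |.|^2 of F (valued in the reals R). *)
Definition opnorm (R : realType) (F : nzRingType) (abs2 : F -> R) (m n : nat)
    (A : 'M[F]_(m, n)) : R :=
  sup [set Num.sqrt (\sum_(i < m) abs2 ((A *m x) i 0)) |
        x in [set x : 'cV[F]_n | \sum_(j < n) abs2 (x j 0) <= 1]].

Definition schur_mul (F : nzRingType) (m n : nat) (M : 'M[bool]_(m, n))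
    (X : 'M[F]_(m, n)) : 'M[F]_(m, n) :=
  \matrix_(i < m, j < n) ((M i j)%:R * X i j).

Definition schur_norm (R : realType) (F : nzRingType) (abs2 : F -> R)
    (m n : nat) (M : 'M[bool]_(m, n)) : R :=
  sup [set opnorm abs2 (schur_mul M X) |
        X in [set X : 'M[F]_(m, n) | opnorm abs2 X <= 1]].

Definition abs2R (R : realType) (x : R) : R := x ^+ 2.
Definition abs2C (R : realType) (z : R[i]) : R := complex.Re z ^+ 2 + complex.Im z ^+ 2.

Definition schur_normR (R : realType) (m n : nat) (M : 'M[bool]_(m, n)) : R :=
  schur_norm (@abs2R R) M.
Definition schur_normC (R : realType) (m n : nat) (M : 'M[bool]_(m, n)) : R :=
  schur_norm (@abs2C R) M.

(* Expectation over G(m,n,1/2): every one of the 2^(mn) biadjacency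
   matrices has probability 2^-(mn). *)
Definition expect_half (R : realType) (m n : nat) (f : 'M[bool]_(m, n) -> R) : R :=
  (\sum_(M : 'M[bool]_(m, n)) f M) / (2 ^ (m * n))%:R.

From HB Require Import structures.
From mathcomp Require Import all_boot all_order all_algebra.
From mathcomp Require Import classical_sets reals.
From mathcomp.real_closed Require Import complex.
From mathcomp Require Import ring lra zify.
Import Order.TTheory GRing.Theory Num.Theory.
Local Open Scope ring_scope.
Set Implicit Arguments. Unset Strict Implicit. Unset Printing Implicit Defensive.

(* Write M = (A + J) / 2, where A is the +-1 sign matrix of M, and put B = A A^T,
   lam = 4 (m + n). The real matrix X = 4 sqrt(m + n) (B + lam)^-1 A is a contraction,
   so ||M||. is at least the norm of (M o X) u for the flat unit vector u. By
   Cauchy-Schwarz, sqrt(mn) |(M o X) u| bounds the entry sum of M o X, which is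
   (<A, X> + sum X) / 2, where sum X >= -sqrt(mn) and
   <A, X> = 4 sqrt(m + n) tr((B + lam)^-1 B) >= 4 sqrt(m + n) (tr B / lam - tr B^2 / lam^2).
   Here tr B = mn, and averaging over the sign patterns kills every term
   A_ij A_lj A_lp A_ip of tr B^2 with i <> l and j <> p, so E tr B^2 <= mn (m + n).
   Altogether E ||M||. >= 3/8 sqrt(mn / (m + n)) - 1/2, and mn / (m + n) >= k / 2. *)

Section EuclideanColumns.
Variable R : realType.

Definition cdot p (u v : 'cV[R]_p) : R := \sum_i u i 0 * v i 0.
Definition cnorm2 p (v : 'cV[R]_p) : R := \sum_i v i 0 ^+ 2.
Definition contraction p q (X : 'M[R]_(p, q)) := forall v, cnorm2 (X *m v) <= cnorm2 v.

Lemma cdotC p (u v : 'cV[R]_p) : cdot u v = cdot v u.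
Proof. by apply: eq_bigr => i _; rewrite mulrC. Qed.

Lemma cdotvv p (u : 'cV[R]_p) : cdot u u = cnorm2 u.
Proof. by apply: eq_bigr => i _; rewrite expr2. Qed.

Lemma cdotDr p (u v w : 'cV[R]_p) : cdot u (v + w) = cdot u v + cdot u w.
Proof. by rewrite /cdot -big_split; apply: eq_bigr => i _; rewrite mxE mulrDr. Qed.

Lemma cdotZr p (u v : 'cV[R]_p) a : cdot u (a *: v) = a * cdot u v.
Proof. by rewrite /cdot big_distrr; apply: eq_bigr => i _; rewrite mxE mulrCA. Qed.

Lemma cdot0r p (u : 'cV[R]_p) : cdot u 0 = 0.
Proof. by rewrite /cdot big1 // => i _; rewrite mxE mulr0. Qed.

Lemma cdot_mulmxr p q (A : 'M[R]_(p, q)) u w : cdot u (A *m w) = cdot (A^T *m u) w.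
Proof.
rewrite /cdot; under eq_bigr do rewrite mxE big_distrr.
rewrite exchange_big /=; apply: eq_bigr => j _.
by rewrite mxE big_distrl /=; apply: eq_bigr => i _; rewrite mxE; ring.
Qed.

Lemma cdot_le p (u v : 'cV[R]_p) : cdot u v <= cnorm2 u + cnorm2 v / 4.
Proof.
rewrite /cdot /cnorm2 big_distrl -big_split /=; apply: ler_sum => i _.
by have := sqr_ge0 (u i 0 - v i 0 / 2); nra.
Qed.

Lemma cnorm2_ge0 p (u : 'cV[R]_p) : 0 <= cnorm2 u.
Proof. by apply: sumr_ge0 => i _; rewrite sqr_ge0. Qed.

Lemma cnorm20 p : cnorm2 (0 : 'cV[R]_p) = 0.
Proof. by rewrite /cnorm2 big1 // => i _; rewrite mxE expr0n. Qed.

Lemma cnorm2_eq0 p (u : 'cV[R]_p) : cnorm2 u = 0 -> u = 0.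
Proof.
move=> u0; apply/matrixP => i j; rewrite (ord1 j) mxE.
have /eqP := psumr_eq0P (fun k _ => sqr_ge0 (u k 0)) u0 (i := i) isT.
by rewrite sqrf_eq0 => /eqP.
Qed.

Lemma cnorm2Z p (v : 'cV[R]_p) c : cnorm2 (c *: v) = c ^+ 2 * cnorm2 v.
Proof. by rewrite /cnorm2 mulr_sumr; apply: eq_bigr => i _; rewrite mxE exprMn. Qed.

Lemma cnorm2_const p (c : R) : cnorm2 (const_mx c : 'cV[R]_p) = p%:R * c ^+ 2.
Proof.
rewrite /cnorm2 (eq_bigr (fun _ => c ^+ 2)) ?sumr_const ?card_ord ?mulr_natl //.
by move=> i _; rewrite mxE.
Qed.

(* Expand the nonnegative double sum of the (a i - a j)^2. *)
Lemma sqr_sum_le p (a : 'I_p -> R) : (\sum_i a i) ^+ 2 <= p%:R * \sum_i a i ^+ 2.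
Proof.
have : 0 <= \sum_i \sum_j (a i - a j) ^+ 2.
  by apply: sumr_ge0 => i _; apply: sumr_ge0 => j _; rewrite sqr_ge0.
have -> : \sum_i \sum_j (a i - a j) ^+ 2 =
    \sum_(i < p) \sum_(j < p) a i ^+ 2 + \sum_(i < p) \sum_(j < p) a j ^+ 2
    - 2 * \sum_(i < p) \sum_(j < p) a i * a j.
  rewrite mulr_sumr -big_split -sumrB /=; apply: eq_bigr => i _.
  by rewrite mulr_sumr -big_split -sumrB /=; apply: eq_bigr => j _; ring.
have -> : \sum_(i < p) \sum_(j < p) a i * a j = (\sum_i a i) ^+ 2.
  by rewrite expr2 mulr_suml; apply: eq_bigr => i _; rewrite mulr_sumr.
have sq : \sum_(i < p) \sum_(j < p) a i ^+ 2 = p%:R * \sum_i a i ^+ 2.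
  by rewrite mulr_sumr; apply: eq_bigr => i _; rewrite sumr_const card_ord mulr_natl.
by rewrite sq exchange_big /= sq; lra.
Qed.

Lemma norm_sum_le p (v : 'cV[R]_p) :
  `|\sum_i v i 0| <= Num.sqrt p%:R * Num.sqrt (cnorm2 v).
Proof. by rewrite -sqrtrM // -sqrtr_sqr ler_wsqrtr // sqr_sum_le. Qed.

Lemma sum_mulmx_const p q (Y : 'M[R]_(p, q)) c :
  \sum_i (Y *m (const_mx c : 'cV[R]_q)) i 0 = c * \sum_i \sum_j Y i j.
Proof.
rewrite mulr_sumr; apply: eq_bigr => i _; rewrite mxE mulr_sumr.
by apply: eq_bigr => j _; rewrite mxE mulrC.
Qed.

Lemma contraction_sum_ge p q (X : 'M[R]_(p, q)) : contraction X ->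
  - (Num.sqrt p%:R * Num.sqrt q%:R) <= \sum_i \sum_j X i j.
Proof.
move=> contrX; have := norm_sum_le (X *m const_mx 1).
rewrite sum_mulmx_const mul1r => le_sum.
have : Num.sqrt (cnorm2 (X *m const_mx 1)) <= Num.sqrt q%:R.
  by rewrite ler_wsqrtr // (le_trans (contrX _)) // cnorm2_const expr1n mulr1.
move=> /(ler_wpM2l (sqrtr_ge0 p%:R)) /(le_trans le_sum).
by rewrite ler_norml => /andP[].
Qed.

Lemma mxtrace_trmx_mul p q (A Z : 'M[R]_(p, q)) :
  \tr (A^T *m Z) = \sum_i \sum_j A i j * Z i j.
Proof.
rewrite /mxtrace exchange_big /=; apply: eq_bigr => j _.
by rewrite mxE; apply: eq_bigr => i _; rewrite mxE.
Qed.

Lemma mxtrace_quad p q (Z : 'M[R]_(p, q)) (P : 'M[R]_p) :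
  \tr (Z^T *m (P *m Z)) = \sum_j cdot (col j Z) (P *m col j Z).
Proof.
rewrite /mxtrace; apply: eq_bigr => j _; rewrite /cdot mxE; apply: eq_bigr => i _.
by rewrite !mxE; congr (_ * _); apply: eq_bigr => k _; rewrite !mxE.
Qed.

End EuclideanColumns.

Section GramResolvent.
Variables (R : realType) (m n : nat) (A : 'M[R]_(m, n)) (lam : R).
Hypothesis lam_gt0 : 0 < lam.

Local Notation B := (A *m A^T).
Local Notation S := (B + lam%:M).

Lemma cdot_gram_shift (w : 'cV[R]_m) :
  cdot w (S *m w) = cnorm2 (A^T *m w) + lam * cnorm2 w.
Proof. by rewrite mulmxDl -mulmxA cdotDr cdot_mulmxr cdotvv mul_scalar_mx cdotZr cdotvv. Qed.

Lemma gram_shift_unit : S \in unitmx.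
Proof.
rewrite unitmxE unitfE; apply/negP => /det0P [v v_neq0 vS0].
have Sv0 : S *m v^T = 0.
  by rewrite -[S]trmxK raddfD /= trmx_mul trmxK tr_scalar_mx -trmx_mul vS0 trmx0.
have := cdot_gram_shift v^T; rewrite Sv0 cdot0r => /esym/eqP.
have lam_v_ge0 : 0 <= lam * cnorm2 v^T by rewrite mulr_ge0 ?cnorm2_ge0 // ltW.
rewrite paddr_eq0 ?cnorm2_ge0 // mulf_eq0 (gt_eqF lam_gt0) /=.
move=> /andP[_ /eqP/cnorm2_eq0/(congr1 trmx)]; rewrite trmxK trmx0 => v0.
by rewrite v0 eqxx in v_neq0.
Qed.

Lemma mul_gram_shift_inv (z : 'cV[R]_m) : S *m (invmx S *m z) = z.
Proof. by rewrite mulmxA mulmxV ?mul1mx // gram_shift_unit. Qed.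

Lemma resolvent_contraction (x : 'cV[R]_n) :
  4 * lam * cnorm2 (invmx S *m (A *m x)) <= cnorm2 x.
Proof.
set y := invmx S *m (A *m x).
have := cdot_gram_shift y; rewrite mul_gram_shift_inv cdot_mulmxr => eq_y.
have := cdot_le (A^T *m y) x; have := cnorm2_ge0 (A^T *m y); nra.
Qed.

Lemma resolvent_psd (z : 'cV[R]_m) : 0 <= cdot z (invmx S *m z).
Proof.
rewrite -{1}(mul_gram_shift_inv z) cdotC cdot_gram_shift.
by rewrite addr_ge0 ?mulr_ge0 ?cnorm2_ge0 // ltW.
Qed.

(* The resolvent identity [lam (B + lam)^-1 = 1 - B (B + lam)^-1], applied twice. *)
Lemma tr_resolvent_ge :
  \tr B / lam - \tr (B *m B) / lam ^+ 2 <= \tr (invmx S *m B).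
Proof.
have unitS := gram_shift_unit; have Rs_psd := resolvent_psd.
move: unitS Rs_psd; move Gdef : (A *m A^T) => G unitS Rs_psd; set Rs := invmx _.
have GRs : G *m Rs = 1%:M - lam *: Rs.
  by rewrite -(mulmxV unitS) mulmxDl mul_scalar_mx addrK.
have RsG : Rs *m G = G *m Rs.
  by rewrite GRs -(mulVmx unitS) mulmxDr mul_mx_scalar addrK.
have lamRs : lam *: Rs = 1%:M - G *m Rs by rewrite GRs opprB addrC subrK.
have tr1 : lam * \tr (G *m Rs) = \tr G - \tr (G *m (G *m Rs)).
  by rewrite -mxtraceZ scalemxAr lamRs mulmxBr mulmx1 raddfB.
have tr2 : lam * \tr (G *m (G *m Rs)) = \tr (G *m G) - \tr (G *m (G *m (G *m Rs))).
  by rewrite -mxtraceZ !scalemxAr lamRs !mulmxBr mulmx1 raddfB.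
have tr3_ge0 : 0 <= \tr (G *m (G *m (G *m Rs))).
  have GAt : (G *m A) *m (G *m A)^T = G *m G *m G.
    have Gt : G^T = G by rewrite -Gdef trmx_mul trmxK.
    by rewrite trmx_mul Gt !mulmxA -[G *m A *m A^T]mulmxA Gdef.
  have -> : \tr (G *m (G *m (G *m Rs))) = \tr ((G *m A)^T *m (Rs *m (G *m A))).
    by rewrite [RHS]mxtrace_mulC -mulmxA GAt !mulmxA [LHS]mxtrace_mulC !mulmxA.
  by rewrite mxtrace_quad sumr_ge0 // => j _; rewrite -Gdef; apply: Rs_psd.
have lam2_gt0 : 0 < lam ^+ 2 by rewrite exprn_gt0.
have trGRs : lam ^+ 2 * \tr (G *m Rs) =
    lam * \tr G - \tr (G *m G) + \tr (G *m (G *m (G *m Rs))).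
  by rewrite expr2 -mulrA tr1 mulrBr tr2; ring.
rewrite RsG -(ler_pM2l lam2_gt0) trGRs.
have -> : lam ^+ 2 * (\tr G / lam - \tr (G *m G) / lam ^+ 2) = lam * \tr G - \tr (G *m G).
  by field; rewrite gt_eqF.
lra.
Qed.

End GramResolvent.

Lemma cnorm2_unit_const (R : realType) q : (0 < q)%N ->
  cnorm2 (const_mx (Num.sqrt q%:R)^-1 : 'cV[R]_q) = 1.
Proof. by move=> q_gt0; rewrite cnorm2_const exprVn sqr_sqrtr // mulfV // pnatr_eq0 -lt0n. Qed.

Lemma sum_entries_le (R : realType) p q (Y : 'M[R]_(p, q)) : (0 < q)%N ->
  \sum_i \sum_j Y i j <=
    Num.sqrt (p * q)%:R * Num.sqrt (cnorm2 (Y *m const_mx (Num.sqrt q%:R)^-1)).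
Proof.
move=> q_gt0; have sq_gt0 : 0 < Num.sqrt (q%:R : R) by rewrite sqrtr_gt0 ltr0n.
have := norm_sum_le (Y *m const_mx (Num.sqrt q%:R)^-1).
rewrite sum_mulmx_const normrM gtr0_norm ?invr_gt0 // -(ler_pM2l sq_gt0) mulrA.
rewrite mulfV ?gt_eqF // mul1r mulrA => le_sum.
by rewrite natrM sqrtrM // (mulrC (Num.sqrt p%:R)) (le_trans (ler_norm _) le_sum).
Qed.

Section SignMatrix.
Variables (R : realType) (m n : nat).
Implicit Types (M : 'M[bool]_(m, n)) (X : 'M[R]_(m, n)).

Definition sign_mx M : 'M[R]_(m, n) := \matrix_(i, j) (if M i j then 1 else -1).

Definition sign_gram M : 'M[R]_m := sign_mx M *m (sign_mx M)^T.

Lemma sign_mx_mul_self M i j : sign_mx M i j * sign_mx M i j = 1.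
Proof. by rewrite mxE; case: (M i j); rewrite ?mulr1 ?mulrNN ?mulr1. Qed.

Lemma mxtrace_sign_gram M : \tr (sign_gram M) = (m * n)%:R.
Proof.
rewrite mxtrace_mulC mxtrace_trmx_mul (eq_bigr (fun _ => n%:R)) => [|i _].
  by rewrite sumr_const card_ord natrM mulr_natl.
by rewrite (eq_bigr (fun _ => 1)) ?sumr_const ?card_ord // => j _; apply: sign_mx_mul_self.
Qed.

Lemma sum_schur_sign M X :
  \sum_i \sum_j schur_mul M X i j = (\tr ((sign_mx M)^T *m X) + \sum_i \sum_j X i j) / 2.
Proof.
rewrite mxtrace_trmx_mul -big_split mulr_suml; apply: eq_bigr => i _.
rewrite -big_split mulr_suml; apply: eq_bigr => j _.
by rewrite !mxE; case: (M i j) => /=; field.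
Qed.

End SignMatrix.

Section TestMatrix.
Variables (R : realType) (m n : nat) (M : 'M[bool]_(m, n)).
Hypotheses (m_gt0 : (0 < m)%N) (n_gt0 : (0 < n)%N).

Local Notation t := (Num.sqrt (m + n)%:R : R).
Local Notation mu := (Num.sqrt (m * n)%:R : R).
Local Notation lam := (4 * t ^+ 2).
Local Notation G := (sign_gram R M).

Definition test_mx : 'M[R]_(m, n) := (4 * t) *: (invmx (G + lam%:M) *m sign_mx R M).

Let t_gt0 : 0 < t. Proof. by rewrite sqrtr_gt0 ltr0n addn_gt0 m_gt0. Qed.
Let mu_gt0 : 0 < mu. Proof. by rewrite sqrtr_gt0 ltr0n muln_gt0 m_gt0. Qed.
Let lam_gt0 : 0 < lam. Proof. by rewrite mulr_gt0 // exprn_gt0. Qed.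

Lemma test_mx_contraction : contraction test_mx.
Proof.
move=> v; rewrite -scalemxAl -mulmxA cnorm2Z.
by have := resolvent_contraction (sign_mx R M) lam_gt0 v; rewrite mulrA -expr2 exprMn.
Qed.

Lemma mxtrace_sign_test_mx :
  4 * t * (mu ^+ 2 / lam - \tr (G *m G) / lam ^+ 2) <= \tr ((sign_mx R M)^T *m test_mx).
Proof.
rewrite -scalemxAr mxtraceZ ler_pM2l ?mulr_gt0 // [X in _ <= X]mxtrace_mulC.
rewrite -[X in _ <= \tr X]mulmxA sqr_sqrtr // -(mxtrace_sign_gram R M).
exact: tr_resolvent_ge.
Qed.

Lemma schur_test_mx_ge :
  mu / (2 * t) - \tr (G *m G) / (8 * t ^+ 3 * mu) - 1 / 2 <=
    Num.sqrt (cnorm2 (schur_mul M test_mx *m const_mx (Num.sqrt n%:R)^-1)).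
Proof.
have sum_le := sum_entries_le (schur_mul M test_mx) n_gt0.
rewrite sum_schur_sign in sum_le.
have sum_ge := contraction_sum_ge test_mx_contraction.
rewrite -sqrtrM // -natrM in sum_ge.
have tr_ge := mxtrace_sign_test_mx.
have -> : mu / (2 * t) - \tr (G *m G) / (8 * t ^+ 3 * mu) - 1 / 2 =
    (4 * t * (mu ^+ 2 / lam - \tr (G *m G) / lam ^+ 2) - mu) / (2 * mu).
  by field; rewrite !gt_eqF.
rewrite ler_pdivrMr ?mulr_gt0 //; lra.
Qed.

End TestMatrix.

Lemma sum_delta (R : nzRingType) q (j : 'I_q) : \sum_(p < q) ((j == p)%:R : R) = 1.
Proof. by rewrite (bigD1 j) //= eqxx big1 ?addr0 // => p; rewrite eq_sym => /negbTE ->. Qed.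

Section Expectation.
Variables (R : realType) (m n : nat).
Implicit Types (f g : 'M[bool]_(m, n) -> R) (M : 'M[bool]_(m, n)).

Local Notation N := ((2 ^ (m * n))%:R : R).

Lemma sum_boolmx_const (c : R) : \sum_(M : 'M[bool]_(m, n)) c = N * c.
Proof. by rewrite sumr_const card_mx card_bool mulr_natl. Qed.

Lemma expect_half_le f g : (forall M, f M <= g M) -> expect_half f <= expect_half g.
Proof. by move=> le_fg; rewrite ler_pM2r ?invr_gt0 ?ltr0n ?expn_gt0 // ler_sum. Qed.

Lemma expect_half_cst (c : R) : expect_half (fun _ : 'M[bool]_(m, n) => c) = c.
Proof. by rewrite /expect_half sum_boolmx_const mulrC mulKf // pnatr_eq0 expn_eq0. Qed.

Lemma expect_half_ge0 f : (forall M, 0 <= f M) -> 0 <= expect_half f.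
Proof. by move=> f_ge0; rewrite -(expect_half_cst 0) expect_half_le. Qed.

Lemma expect_half_affine a b f :
  expect_half (fun M => a - f M / b) = a - expect_half f / b.
Proof.
rewrite /expect_half sumrB -mulr_suml sum_boolmx_const mulrBl [N * a]mulrC.
by rewrite mulfK ?pnatr_eq0 ?expn_eq0 // mulrAC.
Qed.

Local Notation A M := (sign_mx R M).

Lemma mxtrace_sign_gram2E M : \tr (sign_gram R M *m sign_gram R M) =
  \sum_i \sum_l \sum_j \sum_p (A M i j * A M l j * (A M l p * A M i p)).
Proof.
rewrite /mxtrace; apply: eq_bigr => i _; rewrite mxE; apply: eq_bigr => l _.
rewrite !mxE big_distrl /=; apply: eq_bigr => j _; rewrite big_distrr /=.
by apply: eq_bigr => p _; rewrite !mxE.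
Qed.

Definition flip_entry (i : 'I_m) (j : 'I_n) M : 'M[bool]_(m, n) :=
  \matrix_(a, b) (if (a == i) && (b == j) then ~~ M a b else M a b).

Lemma flip_entryK i j : involutive (flip_entry i j).
Proof.
move=> M; apply/matrixP => a b; rewrite !mxE.
by case: ((a == i) && (b == j)); rewrite ?negbK.
Qed.

(* Flipping the entry (i, j) changes the sign of the summand and permutes the sign patterns. *)
Lemma sum_sign4_offdiag (i l : 'I_m) (j p : 'I_n) : i != l -> j != p ->
  \sum_M (A M i j * A M l j * (A M l p * A M i p)) = 0.
Proof.
move=> i_neq_l j_neq_p; set S := (X in X = 0).
suff : S = - S by lra.
rewrite {1}/S (reindex_inj (can_inj (flip_entryK i j))) -sumrN; apply: eq_bigr => M _.
rewrite !mxE !eqxx eq_sym (negbTE i_neq_l) eq_sym (negbTE j_neq_p) /=.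
by case: (M i j); case: (M l j); case: (M l p); case: (M i p); rewrite /=; ring.
Qed.

Lemma sum_sign4_le (i l : 'I_m) (j p : 'I_n) :
  \sum_M (A M i j * A M l j * (A M l p * A M i p)) <= N * ((i == l)%:R + (j == p)%:R).
Proof.
have N_ge0 : 0 <= N by [].
case: (eqVneq i l) => [<-|i_neq_l].
  under eq_bigr do rewrite -mulrA sign_mx_mul_self mulrA sign_mx_mul_self mulr1.
  by rewrite sum_boolmx_const ler_pM2l ?ltr0n ?expn_gt0 //= lerDl.
case: (eqVneq j p) => [<-|j_neq_p].
  under eq_bigr do rewrite -mulrA [X in _ * X]mulrA sign_mx_mul_self mul1r sign_mx_mul_self.
  by rewrite sum_boolmx_const ler_pM2l ?ltr0n ?expn_gt0 //= lerDr.
by rewrite sum_sign4_offdiag // mulr_ge0 // addr_ge0.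
Qed.

Lemma sum_deltas :
  \sum_(i < m) \sum_(l < m) \sum_(j < n) \sum_(p < n) ((i == l)%:R + (j == p)%:R) =
    (m * n * (m + n))%:R :> R.
Proof.
under eq_bigr do under eq_bigr do under eq_bigr do
  rewrite big_split /= sum_delta sumr_const card_ord.
under eq_bigr do under eq_bigr do rewrite sumr_const card_ord.
under eq_bigr do rewrite sumrMnl big_split /= sumrMnl sum_delta sumr_const card_ord.
by rewrite sumr_const card_ord -natrD -mulrnA -[LHS]mulr_natr -natrM; congr (_ %:R); lia.
Qed.

Lemma expect_half_tr_sign_gram2 :
  expect_half (fun M => \tr (sign_gram R M *m sign_gram R M)) <= (m * n * (m + n))%:R.
Proof.
rewrite /expect_half ler_pdivrMr ?ltr0n ?expn_gt0 // mulrC -sum_deltas mulr_sumr.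
under eq_bigr do rewrite mxtrace_sign_gram2E.
rewrite exchange_big; apply: ler_sum => i _; rewrite mulr_sumr.
rewrite exchange_big; apply: ler_sum => l _; rewrite mulr_sumr.
rewrite exchange_big; apply: ler_sum => j _; rewrite mulr_sumr.
rewrite exchange_big; apply: ler_sum => p _.
exact: sum_sign4_le.
Qed.

End Expectation.

Lemma sqrt_minn_half_le (R : realType) m n : (0 < m + n)%N ->
  Num.sqrt ((minn m n)%:R / 2) <= Num.sqrt (m * n)%:R / Num.sqrt (m + n)%:R :> R.
Proof.
move=> mn_gt0; rewrite -sqrtrV // -sqrtrM // ler_sqrt ?mulr_ge0 ?invr_ge0 //.
rewrite ler_pdivrMr ?ltr0n // mulrAC ler_pdivlMr ?ltr0n // -!natrM ler_nat; nia.
Qed.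

Local Open Scope classical_set_scope.

Section ScalarField.
Variables (R : realType) (F : nzRingType) (abs2 : F -> R) (iota : {rmorphism R -> F}).
Hypothesis abs2_ge0 : forall x, 0 <= abs2 x.
Hypothesis abs2_iota : forall r, abs2 (iota r) = r ^+ 2.
Hypothesis abs2_add_le : forall a b, abs2 (a + b) <= 2 * abs2 a + 2 * abs2 b.
Hypothesis abs2M : forall a b, abs2 (a * b) = abs2 a * abs2 b.
Hypothesis contraction_iota : forall p q (X : 'M[R]_(p, q)), contraction X ->
  forall z : 'cV[F]_q, \sum_i abs2 ((map_mx iota X *m z) i 0) <= \sum_j abs2 (z j 0).

Lemma abs2_0 : abs2 0 = 0.
Proof. by rewrite -(rmorph0 iota) abs2_iota expr0n. Qed.

Lemma abs2_1 : abs2 1 = 1.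
Proof. by rewrite -(rmorph1 iota) abs2_iota expr1n. Qed.

Lemma abs2_sum_le p (f : 'I_p -> F) :
  abs2 (\sum_j f j) <= (2 ^ p)%:R * \sum_j abs2 (f j).
Proof.
elim: p f => [|p IHp] f; first by rewrite !big_ord0 abs2_0 mulr0.
rewrite !big_ord_recl expnS natrM; apply: le_trans (abs2_add_le _ _) _.
have := IHp (fun i => f (lift ord0 i)); have := abs2_ge0 (f ord0).
have : 1 <= (2 ^ p)%:R :> R by rewrite ler1n expn_gt0.
have : 0 <= \sum_(i < p) abs2 (f (lift ord0 i)) by apply: sumr_ge0.
nra.
Qed.

Lemma abs2_entry_le_sum n (x : 'cV[F]_n) j : abs2 (x j 0) <= \sum_k abs2 (x k 0).
Proof. by rewrite (bigD1 j) //= lerDl sumr_ge0. Qed.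

Definition opnorm_set m n (Y : 'M[F]_(m, n)) :=
  [set Num.sqrt (\sum_(i < m) abs2 ((Y *m x) i 0)) |
        x in [set x : 'cV[F]_n | \sum_(j < n) abs2 (x j 0) <= 1]].

(* The crude factor [2 ^ n] only serves to make the supremum defining [opnorm] that
   of a bounded set. *)
Lemma sum_abs2_mulmx_le m n (Y : 'M[F]_(m, n)) (x : 'cV[F]_n) :
  \sum_j abs2 (x j 0) <= 1 ->
  \sum_i abs2 ((Y *m x) i 0) <= (2 ^ n)%:R * \sum_i \sum_j abs2 (Y i j).
Proof.
move=> x_le1; rewrite mulr_sumr; apply: ler_sum => i _; rewrite mxE.
apply: le_trans (abs2_sum_le _) _; rewrite ler_pM2l ?ltr0n ?expn_gt0 //.
apply: ler_sum => j _; rewrite abs2M.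
have := le_trans (abs2_entry_le_sum x j) x_le1.
by have := abs2_ge0 (Y i j); have := abs2_ge0 (x j 0); nra.
Qed.

Lemma opnorm_set_ubound m n (Y : 'M[F]_(m, n)) : has_ubound (opnorm_set Y).
Proof.
exists (Num.sqrt ((2 ^ n)%:R * \sum_i \sum_j abs2 (Y i j))).
by move=> _ [x x_le1 <-]; rewrite ler_wsqrtr // sum_abs2_mulmx_le.
Qed.

Lemma opnorm_set_neq0 m n (Y : 'M[F]_(m, n)) : opnorm_set Y !=set0.
Proof.
exists (Num.sqrt (\sum_(i < m) abs2 ((Y *m (0 : 'cV[F]_n)) i 0))); exists 0 => //.
by rewrite /= big1 // => j _; rewrite mxE abs2_0.
Qed.

Lemma opnorm_ge m n (Y : 'M[F]_(m, n)) (x : 'cV[F]_n) : \sum_j abs2 (x j 0) <= 1 ->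
  Num.sqrt (\sum_i abs2 ((Y *m x) i 0)) <= opnorm abs2 Y.
Proof. by move=> x_le1; apply: ub_le_sup; [exact: opnorm_set_ubound | exists x]. Qed.

Lemma abs2_entry_le_opnorm m n (X : 'M[F]_(m, n)) i j :
  opnorm abs2 X <= 1 -> abs2 (X i j) <= 1.
Proof.
move=> X_le1; set e : 'cV[F]_n := delta_mx j 0.
have e_le1 : \sum_k abs2 (e k 0) <= 1.
  rewrite (bigD1 j) //= big1 ?addr0 => [|k k_neq_j]; first by rewrite mxE !eqxx abs2_1.
  by rewrite mxE (negbTE k_neq_j) abs2_0.
have : Num.sqrt (\sum_i abs2 ((X *m e) i 0)) <= Num.sqrt 1.
  by rewrite sqrtr1 (le_trans (opnorm_ge X e_le1)).
rewrite ler_sqrt // => /(le_trans (abs2_entry_le_sum _ i)); apply: le_trans.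
rewrite mxE (bigD1 j) //= big1 ?addr0 => [|k k_neq_j]; last by rewrite mxE (negbTE k_neq_j) mulr0.
by rewrite mxE !eqxx mulr1.
Qed.

Definition schur_norm_set m n (M : 'M[bool]_(m, n)) :=
  [set opnorm abs2 (schur_mul M X) |
        X in [set X : 'M[F]_(m, n) | opnorm abs2 X <= 1]].

Lemma schur_norm_set_ubound m n (M : 'M[bool]_(m, n)) : has_ubound (schur_norm_set M).
Proof.
exists (Num.sqrt ((2 ^ n)%:R * (m * n)%:R)) => _ [X X_le1 <-].
apply: ge_sup; first exact: opnorm_set_neq0.
move=> _ [x x_le1 <-]; rewrite ler_wsqrtr //.
apply: le_trans (sum_abs2_mulmx_le _ x_le1) _; rewrite ler_pM2l ?ltr0n ?expn_gt0 //.
apply: (@le_trans _ _ (\sum_(i < m) \sum_(j < n) (1 : R))); last first.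
  rewrite (eq_bigr (fun _ => n%:R)) => [|i _]; last by rewrite sumr_const card_ord.
  by rewrite sumr_const card_ord natrM mulr_natl.
apply: ler_sum => i _; apply: ler_sum => j _.
have abs2_bool : abs2 ((M i j)%:R) <= 1.
  by case: (M i j); rewrite ?abs2_1 ?abs2_0 ?ler01.
rewrite mxE abs2M; have := abs2_entry_le_opnorm i j X_le1.
by have := abs2_ge0 (X i j); have := abs2_ge0 ((M i j)%:R); nra.
Qed.

Lemma schur_norm_ge m n (M : 'M[bool]_(m, n)) (X : 'M[R]_(m, n)) (u : 'cV[R]_n) :
  contraction X -> cnorm2 u <= 1 ->
  Num.sqrt (cnorm2 (schur_mul M X *m u)) <= schur_norm abs2 M.
Proof.
move=> contrX u_le1.
have iotaX_le1 : opnorm abs2 (map_mx iota X) <= 1.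
  apply: ge_sup; first exact: opnorm_set_neq0.
  move=> _ [z z_le1 <-]; rewrite -sqrtr1 ler_wsqrtr //.
  exact: le_trans (contraction_iota contrX z) z_le1.
have schur_iota : schur_mul M (map_mx iota X) = map_mx iota (schur_mul M X).
  by apply/matrixP => i j; rewrite !mxE rmorphM /= rmorph_nat.
have iota_u_le1 : \sum_j abs2 (map_mx iota u j 0) <= 1.
  by rewrite (eq_bigr (fun j => u j 0 ^+ 2)) // => j _; rewrite mxE abs2_iota.
apply: le_trans (_ : opnorm abs2 (schur_mul M (map_mx iota X)) <= _); last first.
  by apply: ub_le_sup; [exact: schur_norm_set_ubound | exists (map_mx iota X)].
rewrite schur_iota; apply: le_trans (opnorm_ge _ iota_u_le1).
by rewrite -map_mxM /cnorm2; under [X in _ <= Num.sqrt X]eq_bigr do rewrite mxE abs2_iota.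
Qed.

Lemma schur_norm_ge0 m n (M : 'M[bool]_(m, n)) : 0 <= schur_norm abs2 M.
Proof.
have := @schur_norm_ge m n M 0 0; rewrite mulmx0 !cnorm20 sqrtr0; apply => // v.
by rewrite mul0mx cnorm20 cnorm2_ge0.
Qed.

Section Dimensions.
Variables (m n : nat).
Hypotheses (m_gt0 : (0 < m)%N) (n_gt0 : (0 < n)%N).

Local Notation t := (Num.sqrt (m + n)%:R : R).
Local Notation mu := (Num.sqrt (m * n)%:R : R).

Let t_gt0 : 0 < t. Proof. by rewrite sqrtr_gt0 ltr0n addn_gt0 m_gt0. Qed.
Let mu_gt0 : 0 < mu. Proof. by rewrite sqrtr_gt0 ltr0n muln_gt0 m_gt0. Qed.

Lemma schur_norm_ge_sign_gram (M : 'M[bool]_(m, n)) :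
  mu / (2 * t) - 1 / 2 - \tr (sign_gram R M *m sign_gram R M) / (8 * t ^+ 3 * mu) <=
    schur_norm abs2 M.
Proof.
have u_le1 : cnorm2 (const_mx (Num.sqrt n%:R)^-1 : 'cV[R]_n) <= 1.
  by rewrite cnorm2_unit_const.
apply: le_trans _ (schur_norm_ge M (test_mx_contraction (R := R) M m_gt0) u_le1).
by have := schur_test_mx_ge R M m_gt0 n_gt0; lra.
Qed.

Lemma expect_schur_norm_ge_ratio :
  3 / 8 * (mu / t) - 1 / 2 <= expect_half (@schur_norm R F abs2 m n).
Proof.
set b := 8 * t ^+ 3 * mu; have b_gt0 : 0 < b by rewrite !mulr_gt0 // exprn_gt0.
have := expect_half_le schur_norm_ge_sign_gram; rewrite expect_half_affine -/b.
have mnE : (m * n * (m + n))%:R = mu ^+ 2 * t ^+ 2 :> R by rewrite natrM !sqr_sqrtr.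
have binv_gt0 : 0 < b^-1 by rewrite invr_gt0.
have := expect_half_tr_sign_gram2 R m n; rewrite mnE -(ler_pM2r binv_gt0).
have -> : mu ^+ 2 * t ^+ 2 / b = mu / (8 * t) by rewrite /b; field; rewrite !gt_eqF.
have ratio : mu / (2 * t) - mu / (8 * t) = 3 / 8 * (mu / t) by field; rewrite gt_eqF.
lra.
Qed.

End Dimensions.

Lemma expect_schur_norm_ge m n :
  1 / 8 * Num.sqrt ((minn m n)%:R / 2) - 1 <= expect_half (@schur_norm R F abs2 m n).
Proof.
have [k0 | ] := posnP (minn m n).
  rewrite k0 mul0r sqrtr0 mulr0 sub0r.
  by apply: le_trans (expect_half_ge0 (@schur_norm_ge0 m n)); rewrite lerN10.
rewrite leq_min => /andP[m_gt0 n_gt0].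
have := expect_schur_norm_ge_ratio m_gt0 n_gt0.
have := sqrt_minn_half_le R (ltn_addr n m_gt0).
have := sqrtr_ge0 ((minn m n)%:R / 2 : R); lra.
Qed.

End ScalarField.

Section ComplexParts.
Variable R : realType.
Implicit Types a b : R[i].

Lemma ReD a b : complex.Re (a + b) = complex.Re a + complex.Re b.
Proof. by case: a; case: b. Qed.

Lemma ImD a b : complex.Im (a + b) = complex.Im a + complex.Im b.
Proof. by case: a; case: b. Qed.

Lemma ReM a b : complex.Re (a * b) = complex.Re a * complex.Re b - complex.Im a * complex.Im b.
Proof. by case: a; case: b. Qed.

Lemma ImM a b : complex.Im (a * b) = complex.Re a * complex.Im b + complex.Im a * complex.Re b.
Proof. by case: a; case: b. Qed.

Lemma abs2CM a b : abs2C (a * b) = abs2C a * abs2C b.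
Proof. by rewrite /abs2C ReM ImM; ring. Qed.

Lemma abs2C_add_le a b : abs2C (a + b) <= 2 * abs2C a + 2 * abs2C b.
Proof.
rewrite /abs2C ReD ImD.
have := sqr_ge0 (complex.Re a - complex.Re b); have := sqr_ge0 (complex.Im a - complex.Im b).
nra.
Qed.

(* A real matrix acts separately on the real and imaginary parts. *)
Lemma contraction_complex p q (X : 'M[R]_(p, q)) : contraction X ->
  forall z : 'cV[R[i]]_q,
  \sum_i abs2C ((map_mx (real_complex R) X *m z) i 0) <= \sum_j abs2C (z j 0).
Proof.
move=> contrX z; set zr := map_mx (@complex.Re R) z; set zi := map_mx (@complex.Im R) z.
have sum_abs2C (w : 'cV[R[i]]_q) : \sum_j abs2C (w j 0) =
    cnorm2 (map_mx (@complex.Re R) w) + cnorm2 (map_mx (@complex.Im R) w).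
  by rewrite /cnorm2 -big_split; apply: eq_bigr => j _; rewrite !mxE.
have ReX i : complex.Re ((map_mx (real_complex R) X *m z) i 0) = (X *m zr) i 0.
  rewrite !mxE (big_morph _ ReD (erefl (complex.Re 0))); apply: eq_bigr => j _.
  by rewrite !mxE ReM /=; ring.
have ImX i : complex.Im ((map_mx (real_complex R) X *m z) i 0) = (X *m zi) i 0.
  rewrite !mxE (big_morph _ ImD (erefl (complex.Im 0))); apply: eq_bigr => j _.
  by rewrite !mxE ImM /=; ring.
have -> : \sum_i abs2C ((map_mx (real_complex R) X *m z) i 0) =
    cnorm2 (X *m zr) + cnorm2 (X *m zi).
  by rewrite /cnorm2 -big_split; apply: eq_bigr => i _; rewrite /abs2C ReX ImX.
by rewrite sum_abs2C lerD.
Qed.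

End ComplexParts.

Theorem proposition8p4 (R : realType) (m n : nat) :
  let k := minn m n in
  (1 / 8) * Num.sqrt (k%:R / 2) - 1 <= expect_half (@schur_normR R m n) /\
  (1 / 8) * Num.sqrt (k%:R / 2) - 1 <= expect_half (@schur_normC R m n).
Proof.
split.
- apply: (@expect_schur_norm_ge R R (@abs2R R) idfun).
  + by move=> x; apply: sqr_ge0.
  + by [].
  + by move=> a b; rewrite /abs2R; have := sqr_ge0 (a - b); nra.
  + by move=> a b; rewrite /abs2R exprMn.
  + move=> p q X contrX z.
    have -> : map_mx idfun X = X by apply/matrixP => i j; rewrite mxE.
    exact: contrX.
- apply: (@expect_schur_norm_ge R R[i] (@abs2C R) (real_complex R)).
  + by move=> x; rewrite /abs2C addr_ge0 ?sqr_ge0.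
  + by move=> r; rewrite /abs2C /= expr0n addr0.
  + exact: abs2C_add_le.
  + exact: abs2CM.
  + exact: contraction_complex.
Qed.
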